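(* For any simplicial complex $K$ and any positive integer $m$, there exists a positive integer $k$ such that the $k$-times iterated barycentric subdivision $K^{(k)}$ of $K$ is $m$-fine.
   Context: For vertices $v,w$ of a simplicial complex $K$, a sequence $p=(\sigma_1,\dots,\sigma_N)$ of $1$-simplices links $(v,w)$ if $v\in\sigma_1$, $w\in\sigma_N$ and $\sigma_i\cap\sigma_{i+1}\ne\varnothing$ for all $i$; its length is $N$. The diameter of a subcomplex $A\subset K$ is $\max_{v,w\in A_0}\min_{p\text{ links }(v,w)}\mathrm{len}(p)$. $K$ is $m$-fine if for every subcomplex $A\subset K$ with diameter $\le m$ one can choose a contractible subcomplex $Z_A$ containing $A$ in such a way that $Z_A\subset Z_B$ whenever $A\subset B$. *)

From HB Require Import structures.
From mathcomp Require Import all_boot all_order all_algebra finmap.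
From mathcomp Require Import boolp reals.
Set Implicit Arguments. Unset Strict Implicit. Unset Printing Implicit Defensive.
Import Order.TTheory GRing.Theory Num.Theory.
Local Open Scope ring_scope.
Local Open Scope fset_scope.

Definition is_complex (V : choiceType) (K : {fset V} -> Prop) : Prop :=
  (forall s, K s -> s != fset0) /\
  (forall s t, K s -> fsubset t s -> t != fset0 -> K t).

Definition is_vertex (V : choiceType) (K : {fset V} -> Prop) (v : V) : Prop :=
  K [fset v].

Definition is_subcomplex (V : choiceType) (K A : {fset V} -> Prop) : Prop :=
  is_complex A /\ (forall s, A s -> K s) /\ (exists s, A s).

Definition is_1simplex (V : choiceType) (K : {fset V} -> Prop) (s : {fset V}) :=
  K s /\ #|` s| = 2%N.

Definition links (V : choiceType) (K : {fset V} -> Prop)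
    (p : seq {fset V}) (v w : V) : Prop :=
  match p with
  | [::] => False
  | s1 :: _ =>
      (forall s, s \in p -> is_1simplex K s) /\
      v \in s1 /\ w \in last s1 p /\
      (forall i, (i.+1 < size p)%N ->
         nth fset0 p i `&` nth fset0 p i.+1 != fset0)
  end.

Definition diam_le (V : choiceType) (K A : {fset V} -> Prop) (m : nat) : Prop :=
  forall v w, is_vertex A v -> is_vertex A w ->
    exists p, links K p v w /\ (size p <= m)%N.

Definition in_gsimplex (R : realType) (V : choiceType) (s : {fset V})
    (x : V -> R) : Prop :=
  (forall v, v \notin s -> x v = 0) /\ (forall v, v \in s -> 0 <= x v) /\
  \sum_(v <- s) x v = 1.

Definition in_real (R : realType) (V : choiceType) (A : {fset V} -> Prop)
    (x : V -> R) : Prop :=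
  exists s, A s /\ in_gsimplex s x.

Definition in_unit (R : realType) (t : R) := 0 <= t <= 1.

(* |A| (with the weak/CW topology) is contractible: there is a point p of |A|
   and a homotopy H : |A| x [0,1] -> |A| from the identity to the constant map p.
   Continuity of H for the weak topology is expressed simplexwise: |A| x [0,1]
   carries the weak topology w.r.t. the |s| x [0,1], and a map from the compact
   |s| x [0,1] into the CW complex |A| is continuous iff its image lies in a
   finite subcomplex (finite support F) and it is continuous for the euclidean
   topology there. *)
Definition contractible (R : realType) (V : choiceType) (A : {fset V} -> Prop)
  : Prop :=
  exists (p : V -> R) (H : (V -> R) -> R -> (V -> R)),
    in_real A p /\
    (forall x, in_real A x -> H x 0 = x) /\
    (forall x, in_real A x -> H x 1 = p) /\
    (forall x t, in_real A x -> in_unit t -> in_real A (H x t)) /\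
    (forall s, A s ->
       (exists F : {fset V}, forall x t, in_gsimplex s x -> in_unit t ->
            forall v, v \notin F -> H x t v = 0) /\
       (forall x t, in_gsimplex s x -> in_unit t ->
          forall eps : R, 0 < eps -> exists2 delta : R, 0 < delta &
            forall y u, in_gsimplex s y -> in_unit u ->
              (forall v, v \in s -> `|x v - y v| < delta) -> `|t - u| < delta ->
              forall v, `|H x t v - H y u v| < eps)).

Definition m_fine (R : realType) (V : choiceType) (K : {fset V} -> Prop)
    (m : nat) : Prop :=
  exists Z : ({fset V} -> Prop) -> ({fset V} -> Prop),
    (forall A, is_subcomplex K A -> diam_le K A m ->
       is_subcomplex K (Z A) /\ contractible R (Z A) /\
       (forall s, A s -> Z A s)) /\
    (forall A B, is_subcomplex K A -> diam_le K A m ->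
       is_subcomplex K B -> diam_le K B m ->
       (forall s, A s -> B s) -> forall s, Z A s -> Z B s).

Definition sd (V : choiceType) (K : {fset V} -> Prop) : {fset {fset V}} -> Prop :=
  fun c => c != fset0 /\ (forall s, s \in c -> K s) /\
    (forall s t, s \in c -> t \in c -> fsubset s t \/ fsubset t s).

Fixpoint iter_vtx (V : choiceType) (k : nat) : choiceType :=
  match k with
  | 0 => V
  | k'.+1 => {fset (iter_vtx V k')}%type : choiceType
  end.

Fixpoint iter_sd (V : choiceType) (K : {fset V} -> Prop) (k : nat)
  : {fset (iter_vtx V k)} -> Prop :=
  match k return {fset (iter_vtx V k)} -> Prop with
  | 0 => K
  | k'.+1 => sd (@iter_sd V K k')
  end.
Arguments iter_sd {V} K k _.
Arguments iter_vtx V k : clear implicits.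

(* Take k = m + 1; each vertex x of K^(k) has a carrier, a simplex of K.
   An edge of sd L joins two nested simplices of L, so a walk of length d in
   sd L starting in a simplex c projects to a walk of length d - 1 in L starting
   in the largest element of c. Inductively, all vertices of K^(m+1) within
   distance m of a given one have carriers sharing a vertex of K. Hence, when A
   has diameter at most m, the set P_A of vertices of K lying in the carriers of
   all vertices of A is nonempty, and A lies in the (m+1)-fold subdivision Z_A of
   the closed star of P_A in K; Z_A grows with A since P_A shrinks. That closed
   star is a cone, hence contractible, and subdivision preserves contractibility:
   the barycentric map |sd L| -> |L| has an explicit continuous inverse, sending y
   to the chain of its upper level sets weighted by the gaps between consecutive
   values of y. *)

From HB Require Import structures.
From mathcomp Require Import all_boot all_order all_algebra finmap.
From mathcomp Require Import boolp reals.
From mathcomp Require Import ring lra.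
Set Implicit Arguments. Unset Strict Implicit. Unset Printing Implicit Defensive.
Import Order.TTheory GRing.Theory Num.Theory.
Local Open Scope fset_scope.

Lemma seq_greatest (T : eqType) (r : rel T) (l : seq T) x :
  transitive r -> x \in l ->
  (forall a b, a \in l -> b \in l -> r a b \/ r b a) ->
  exists2 s, s \in l & forall a, a \in l -> r a s.
Proof.
move=> r_tr; elim: l x => // a l IH x _ tot.
have raa : r a a by case: (tot a a); rewrite ?mem_head.
have totl : forall b c, b \in l -> c \in l -> r b c \/ r c b.
  by move=> b c bl cl; apply: tot; rewrite inE ?bl ?cl orbT.
case: l IH tot totl => [|y l] IH tot totl.
  by exists a; rewrite ?mem_head // => b; rewrite inE => /eqP ->.
have [s sl Hs] := IH y (mem_head y l) totl.
have sal : s \in a :: y :: l by rewrite inE sl orbT.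
case: (tot a s (mem_head _ _) sal) => [ras|rsa].
  by exists s => // b; rewrite inE => /predU1P[->|/Hs].
exists a => [|b]; first exact: mem_head.
by rewrite inE => /predU1P[->|/Hs rbs] //; exact: r_tr rbs rsa.
Qed.

Section Chains.
Variable T : choiceType.
Implicit Types (C : {fset {fset T}}) (s : {fset T}).

Definition is_chain C := forall a b, a \in C -> b \in C -> a `<=` b \/ b `<=` a.

Lemma chain_greatest C s : s \in C -> is_chain C ->
  exists2 p, p \in C & forall a, a \in C -> a `<=` p.
Proof. exact: (@seq_greatest _ (fun a b => a `<=` b) _ _ (@fsubset_trans _)). Qed.

Lemma chain_least C s : s \in C -> is_chain C ->
  exists2 p, p \in C & forall a, a \in C -> p `<=` a.
Proof.
move=> sC ch; apply: (@seq_greatest _ (fun a b => b `<=` a) _ _ _ sC).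
  by move=> b a c ba cb; exact: fsubset_trans cb ba.
by move=> a b aC bC; case: (ch a b aC bC); [right|left].
Qed.

Lemma chain_fsubset C C' : C' `<=` C -> is_chain C -> is_chain C'.
Proof. by move=> sub ch a b /(fsubsetP sub) aC /(fsubsetP sub) bC; exact: ch. Qed.

End Chains.

Section Complexes.
Variables (T : choiceType) (K : {fset T} -> Prop).
Hypothesis HK : is_complex K.
Implicit Types (s t : {fset T}).

Lemma simplex_mem s : K s -> exists x, x \in s.
Proof. by case: HK => K0 _ /K0 /fset0Pn. Qed.

Lemma complex_face s t x : K s -> t `<=` s -> x \in t -> K t.
Proof. by case: HK => _ Kface Ks ts xt; apply: Kface Ks ts _; apply/fset0Pn; exists x. Qed.

Lemma complex_edge s u w : K s -> u \in s -> w \in s -> K [fset u; w].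
Proof.
move=> Ks us ws; apply: (complex_face Ks _ (fset21 u w)).
by apply/fsubsetP => z; rewrite !inE => /orP[] /eqP ->.
Qed.

Lemma sd_complex : is_complex (sd K).
Proof.
split=> [c [] //|c c' [c0 [cK ch]] sub c'0]; split=> //; split.
  by move=> s /(fsubsetP sub) /cK.
exact: chain_fsubset sub ch.
Qed.

End Complexes.

Lemma iter_sd_complex (V : choiceType) (K : {fset V} -> Prop) k :
  is_complex K -> is_complex (iter_sd K k).
Proof. by move=> HK; elim: k => [|k IH] //=; apply: sd_complex. Qed.

Lemma iter_sd_mono (V : choiceType) (K K' : {fset V} -> Prop) k :
  (forall s, K s -> K' s) -> forall c, iter_sd K k c -> iter_sd K' k c.
Proof.
move=> KK'; elim: k => [|k IH] c //=; first exact: KK'.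
by move=> [c0 [cK ch]]; split=> //; split=> // s /cK /IH.
Qed.

(* The vertex set of the smallest simplex of K containing the vertex x of K^(k). *)
Fixpoint carrier (V : choiceType) (k : nat) : iter_vtx V k -> {fset V} :=
  match k return iter_vtx V k -> {fset V} with
  | 0 => fun u => [fset u]
  | k'.+1 => fun x : {fset iter_vtx V k'} => \bigcup_(w <- x) carrier w
  end.
Arguments carrier {V} k _.

Section Carrier.
Variable V : choiceType.

Lemma carrier1 (c : {fset V}) : carrier 1 c = c.
Proof.
apply/fsetP=> v; apply/bigfcupP/idP => [[w /andP[wc _]]|vc].
  by rewrite inE => /eqP ->.
by exists v; rewrite ?vc ?inE.
Qed.

Lemma carrier_sub k (x : {fset iter_vtx V k}) w :
  w \in x -> carrier k w `<=` carrier k.+1 x.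
Proof. by move=> wx; apply: (@bigfcup_sup _ _ x w predT (carrier k)). Qed.

Lemma carrierS k (x y : {fset iter_vtx V k}) :
  x `<=` y -> carrier k.+1 x `<=` carrier k.+1 y.
Proof.
by move=> xy; apply/bigfcupsP => w wx _; apply: carrier_sub; exact: (fsubsetP xy).
Qed.

Variable K : {fset V} -> Prop.
Hypothesis HK : is_complex K.

Lemma carrier_simplex k (c : {fset iter_vtx V k}) :
  iter_sd K k c -> K (carrier k.+1 c).
Proof.
elim: k c => [|k IH] c; first by rewrite carrier1.
move=> [/fset0Pn[x xc] [cK ch]].
have [p pc cp] := chain_greatest xc ch.
have Kp := IH _ (cK _ pc).
have [v vp] := simplex_mem HK Kp.
have cp' : carrier k.+2 c `<=` carrier k.+1 p.
  by apply/bigfcupsP => w wc _; apply: carrierS; exact: cp.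
exact: (complex_face HK Kp cp' (fsubsetP (@carrier_sub k.+1 c p pc) v vp)).
Qed.

Lemma iter_sd_carrier (L : {fset V} -> Prop) k (c : {fset iter_vtx V k}) :
  is_complex L -> iter_sd K k c -> L (carrier k.+1 c) -> iter_sd L k c.
Proof.
move=> HL; elim: k c => [|k IH] c; first by rewrite carrier1.
move=> [c0 [cK ch]] Lc; split=> //; split=> // x xc.
apply: IH; first exact: cK.
have [v vx] := simplex_mem HK (carrier_simplex (cK _ xc)).
exact: (complex_face HL Lc (@carrier_sub k.+1 c x xc) vx).
Qed.

End Carrier.

Fixpoint reach (T : choiceType) (M : {fset T} -> Prop) (S : {fset T})
    (d : nat) (w : T) : Prop :=
  match d with
  | 0 => w \in S
  | d'.+1 => reach M S d' w \/ exists2 u, reach M S d' u & M [fset u; w]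
  end.

Lemma reach_mono (T : choiceType) (M : {fset T} -> Prop) S d d' w :
  (d <= d')%N -> reach M S d w -> reach M S d' w.
Proof.
move=> /subnK <-; elim: (d' - d)%N => [//|n IH] H.
by rewrite addSn; left; apply: IH.
Qed.

Section Reach.
Variables (T : choiceType) (M : {fset T} -> Prop).
Hypothesis HM : is_complex M.

Lemma reach_along S (q : seq {fset T}) (e : {fset T}) d :
  (forall b, b \in e -> reach M S d b) ->
  (forall s, s \in e :: q -> is_1simplex M s) ->
  (forall i, (i.+1 < size (e :: q))%N ->
      nth fset0 (e :: q) i `&` nth fset0 (e :: q) i.+1 != fset0) ->
  forall b, b \in last e q -> reach M S (d + size q) b.
Proof.
elim: q e d => [|e' q IH] e d He H1 Hn b /=; first by rewrite addn0; apply: He.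
move=> bl; rewrite addnS -addSn; apply: (IH e') => // [b' b'e'||i hi].
- have /fset0Pn [c] := Hn 0%N erefl; rewrite inE => /andP[ce ce'].
  have [Me' _] : is_1simplex M e' by apply: H1; rewrite !inE eqxx orbT.
  by right; exists c; [exact: He | exact: (complex_edge HM Me' ce' b'e')].
- by move=> s sq; apply: H1; rewrite inE sq orbT.
- exact: (Hn i.+1).
Qed.

Lemma links_reach p v w : links M p v w -> reach M [fset v] (size p) w.
Proof.
case: p => [//|e q] [H1 [ve [wl Hn]]]; rewrite [size _]/= -add1n.
have [Me _] := H1 e (mem_head _ _).
apply: reach_along H1 Hn w wl => b be.
by right; exists v; [rewrite /= inE | exact: (complex_edge HM Me ve be)].
Qed.

Lemma reach_sd s p d w : sd M s -> p \in s -> (forall a, a \in s -> a `<=` p) ->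
  reach (sd M) s d w -> exists2 w', w' \in w & reach M p d.-1 w'.
Proof.
move=> [_ [sM _]] ps sp; elim: d w => [|d IH] w /=.
  move=> ws; have [w' w'w] := simplex_mem HM (sM _ ws).
  by exists w' => //; exact: (fsubsetP (sp _ ws)).
case=> [/IH [w' w'w Rw']|[u Ru [_ [uwM uwch]]]].
  by exists w' => //; apply: reach_mono Rw'; rewrite leq_pred.
have [u' u'u Ru'] := IH u Ru.
have uin : u \in [fset u; w] by rewrite !inE eqxx.
have win : w \in [fset u; w] by rewrite !inE eqxx orbT.
case: (uwch u w uin win) => [uw|wu].
  by exists u'; [exact: (fsubsetP uw) | apply: reach_mono Ru'; rewrite leq_pred].
have [w' w'w] := simplex_mem HM (uwM _ win).
exists w' => //; have w'u := fsubsetP wu _ w'w.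
case: d {IH} Ru Ru' => [/sp /fsubsetP up _|d _ Ru'] /=; first exact: up.
by right; exists u'; last exact: (complex_edge HM (uwM _ uin) u'u w'u).
Qed.

End Reach.

Section CommonVertex.
Variables (V : choiceType) (K : {fset V} -> Prop).
Hypothesis HK : is_complex K.

Lemma reach_common_vertex k s : iter_sd K k.+1 s ->
  exists v, forall w, reach (iter_sd K k.+1) s k w -> v \in carrier k.+1 w.
Proof.
elim: k s => [|k IH] s.
  move=> [/fset0Pn[x xs] [sK ch]].
  have [p ps sp] := chain_least xs ch.
  have [v vp] := simplex_mem HK (sK _ ps).
  by exists v => w ws; rewrite carrier1; exact: (fsubsetP (sp _ ws)).
move=> Hs; have [/fset0Pn[x xs] [sK ch]] := Hs.
have [p ps sp] := chain_greatest xs ch.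
have [v Hv] := IH p (sK _ ps).
exists v => w /(reach_sd (iter_sd_complex k.+1 HK) Hs ps sp) [w' w'w /Hv].
exact: (fsubsetP (@carrier_sub _ k.+1 w w' w'w)).
Qed.

End CommonVertex.

Definition common_carrier (V : choiceType) k (A : {fset iter_vtx V k} -> Prop)
    (v : V) : Prop :=
  forall x, is_vertex A x -> v \in carrier k x.

Lemma common_carrier_anti (V : choiceType) k (A B : {fset iter_vtx V k} -> Prop) v :
  (forall s, A s -> B s) -> common_carrier B v -> common_carrier A v.
Proof. by move=> AB Bv x /AB; exact: Bv. Qed.

Lemma common_carrier_exists (V : choiceType) (K : {fset V} -> Prop) m
    (A : {fset iter_vtx V m.+1} -> Prop) :
  is_complex K -> is_subcomplex (iter_sd K m.+1) A ->
  diam_le (iter_sd K m.+1) A m -> exists v, common_carrier A v.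
Proof.
move=> HK [HA [AK [s As]]] Adiam.
have [x0 x0s] := simplex_mem HA As.
have Ax0 : is_vertex A x0.
  by apply: (complex_face HA As _ (fset11 x0)); rewrite fsub1set.
have [v Hv] := reach_common_vertex HK (AK _ Ax0).
exists v => x Ax; have [p [lp sp]] := Adiam x0 x Ax0 Ax.
by apply: Hv; apply: reach_mono sp _; exact: (links_reach (iter_sd_complex m.+1 HK) lp).
Qed.

(* The closed star of the simplex spanned by the P-vertices; t lists them. *)
Definition closed_star (V : choiceType) (K : {fset V} -> Prop) (P : V -> Prop)
    : {fset V} -> Prop :=
  fun s => s != fset0 /\ exists2 t : {fset V}, (forall v, P v -> v \in t) & K (s `|` t).

Section ClosedStar.
Variables (V : choiceType) (K : {fset V} -> Prop) (P : V -> Prop).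
Hypothesis HK : is_complex K.

Lemma closed_star_complex : is_complex (closed_star K P).
Proof.
split=> [s [] //|s s' [_ [t Pt Kst]] s's /fset0Pn[x xs']]; split.
  by apply/fset0Pn; exists x.
have xs't : x \in s' `|` t by rewrite inE xs'.
by exists t => //; exact: (complex_face HK Kst (fsetSU t s's) xs't).
Qed.

Lemma closed_star_sub s : closed_star K P s -> K s.
Proof.
move=> [/fset0Pn[x xs] [t _ Kst]].
exact: (complex_face HK Kst (fsubsetUl s t) xs).
Qed.

Lemma closed_star_anti (Q : V -> Prop) s : (forall v, Q v -> P v) ->
  closed_star K P s -> closed_star K Q s.
Proof. by move=> QP [s0 [t Pt Kst]]; split=> //; exists t => // v /QP /Pt. Qed.

Lemma closed_star_simplex s : K s -> (forall v, P v -> v \in s) -> closed_star K P s.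
Proof. by move=> Ks Ps; split; [exact: HK.1 | exists s; rewrite ?fsetUid]. Qed.

Lemma closed_star_cone v : P v -> forall s, closed_star K P s -> closed_star K P (v |` s).
Proof.
move=> Pv s [_ [t Pt Kst]]; split; first by apply/fset0Pn; exists v; exact: fsetU11.
exists t => //; have vt := Pt v Pv.
have sub : (v |` s) `|` t `<=` s `|` t.
  by apply/fsubsetP => z; rewrite !inE => /orP[/orP[/eqP->|->]|->]; rewrite ?vt ?orbT.
have vst : v \in (v |` s) `|` t by rewrite inE fsetU11.
exact: (complex_face HK Kst sub vst).
Qed.

Lemma closed_star_apex v s : P v -> closed_star K P s -> closed_star K P [fset v].
Proof.
move=> Pv /(closed_star_cone Pv) Kvs.
by apply: (complex_face closed_star_complex Kvs _ (fset11 v)); rewrite fsub1set fsetU11.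
Qed.

End ClosedStar.

Section StarOfSubcomplex.
Variables (V : choiceType) (K : {fset V} -> Prop) (k : nat).
Variable A : {fset iter_vtx V k} -> Prop.
Hypotheses (HK : is_complex K) (HA : is_complex A).
Hypothesis AK : forall s, A s -> iter_sd K k s.

Lemma carrier_closed_star c : A c -> closed_star K (common_carrier A) (carrier k.+1 c).
Proof.
move=> Ac; apply: (closed_star_simplex HK (carrier_simplex HK (AK Ac))) => v Av.
have [x xc] := simplex_mem HA Ac.
have Ax : is_vertex A x by apply: (complex_face HA Ac _ (fset11 x)); rewrite fsub1set.
exact: (fsubsetP (carrier_sub xc) _ (Av x Ax)).
Qed.

Lemma iter_sd_closed_star c : A c -> iter_sd (closed_star K (common_carrier A)) k c.
Proof.
move=> Ac; apply: (iter_sd_carrier HK (closed_star_complex _ HK) (AK Ac)).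
exact: carrier_closed_star.
Qed.

End StarOfSubcomplex.


Lemma bigmax_seq_attained d (X : orderType d) (I : eqType) (r : seq I)
    (F : I -> X) x0 :
  \big[Order.max/x0]_(i <- r) F i = x0 \/
  exists2 i, i \in r & \big[Order.max/x0]_(j <- r) F j = F i.
Proof.
elim: r => [|a r IH]; first by left; rewrite big_nil.
rewrite big_cons; have [Fa|Fa] := leP (F a) (\big[Order.max/x0]_(j <- r) F j).
  case: IH => [->|[i ir ->]]; first by left.
  by right; exists i; rewrite // inE ir orbT.
by right; exists a; rewrite ?mem_head.
Qed.

Lemma bigmin_seq_attained d (X : orderType d) (I : eqType) (r : seq I)
    (F : I -> X) x0 :
  r != [::] -> (forall i, i \in r -> (F i <= x0)%O) ->
  exists2 i, i \in r & \big[Order.min/x0]_(j <- r) F j = F i.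
Proof.
elim: r => [//|a [|b r] IH] _ Fx0.
  by exists a; rewrite ?mem_head // big_cons big_nil min_l // Fx0 ?mem_head.
rewrite big_cons.
have [|i ir ->] := IH erefl; first by move=> i ir; apply: Fx0; rewrite inE ir orbT.
have [Fa|Fa] := leP (F a) (F i).
  by exists a; rewrite ?mem_head.
by exists i; rewrite // inE ir orbT.
Qed.

Local Open Scope ring_scope.

Lemma sum_fset_pred1 (V : nmodType) (T : choiceType) (F : {fset T}) a (c : V) :
  a \in F -> \sum_(v <- F) (if v == a then c else 0) = c.
Proof.
move=> aF; rewrite (big_fsetD1 a) //= eqxx big1_fset ?addr0 // => v.
by rewrite in_fsetD1 => /andP[/negbTE -> _].
Qed.

Lemma sum_fset_const (R : pzSemiRingType) (T : choiceType) (F : {fset T}) (c : R) :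
  \sum_(v <- F) c = #|`F|%:R * c.
Proof. by rewrite big_const_seq count_predT iter_addr_0 mulr_natl. Qed.

Lemma sum_fset_supp (V : nmodType) (T : choiceType) (f : T -> V) (A B : {fset T}) :
  (forall v, v \notin A -> f v = 0) -> (forall v, v \notin B -> f v = 0) ->
  \sum_(v <- A) f v = \sum_(v <- B) f v.
Proof.
move=> fA fB; rewrite (big_fset_incl _ (fsubsetUl A B)) => [|v _ /fA //].
by rewrite [RHS](big_fset_incl _ (fsubsetUr A B)) => // v _ /fB.
Qed.

Section Realization.
Variables (R : realType) (T : choiceType).
Implicit Types (s : {fset T}) (x : T -> R).

Lemma gsimplex_out s x v : in_gsimplex s x -> v \notin s -> x v = 0.
Proof. by case=> + _; apply. Qed.

Lemma gsimplex_ge0 s x v : in_gsimplex s x -> 0 <= x v.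
Proof.
by move=> [xout [x0 _]]; case: (boolP (v \in s)) => [/x0 //|/xout ->].
Qed.

Lemma gsimplex_le1 s x v : in_gsimplex s x -> x v <= 1.
Proof.
move=> xs; have [xout [_ <-]] := xs; case: (boolP (v \in s)) => [vs|/xout ->].
  rewrite (big_fsetD1 v) //= lerDl; apply: sumr_ge0 => w _.
  exact: gsimplex_ge0 xs.
by apply: sumr_ge0 => w _; exact: gsimplex_ge0 xs.
Qed.

Lemma in_real_ge0 (A : {fset T} -> Prop) x v : in_real A x -> 0 <= x v.
Proof. by move=> [s [_ xs]]; exact: gsimplex_ge0 xs. Qed.

Lemma in_real_le1 (A : {fset T} -> Prop) x v : in_real A x -> x v <= 1.
Proof. by move=> [s [_ xs]]; exact: gsimplex_le1 xs. Qed.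

End Realization.

Section Barycentric.
Variables (R : realFieldType) (T : choiceType).
Implicit Types (s : {fset T}) (C : {fset {fset T}}) (x : {fset T} -> R).

Definition barycenter s (u : T) : R := (u \in s)%:R / #|`s|%:R.

Lemma barycenter_ge0 s u : 0 <= barycenter s u.
Proof. by rewrite divr_ge0. Qed.

Lemma barycenter_le1 s u : barycenter s u <= 1.
Proof.
rewrite /barycenter; case: (boolP (u \in s)) => us; last by rewrite mul0r.
have cs : (0 < #|`s|)%N by rewrite cardfs_gt0; apply/fset0Pn; exists u.
by rewrite mul1r invf_le1 ?ltr0n // ler1n.
Qed.

Lemma sum_barycenter s F : s != fset0 -> s `<=` F ->
  \sum_(u <- F) barycenter s u = 1.
Proof.
move=> s0 sF; rewrite -mulr_suml -(big_fset_incl _ sF) => [|v _ /negbTE -> //].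
rewrite (eq_big_seq (fun=> 1)) => [|v -> //].
by rewrite sum_fset_const mulr1 divff // pnatr_eq0 -lt0n cardfs_gt0.
Qed.

Definition bary C x (u : T) : R := \sum_(s <- C) x s * barycenter s u.

Lemma bary_ge0 C x u : (forall s, 0 <= x s) -> 0 <= bary C x u.
Proof. by move=> x0; apply: sumr_ge0 => s _; rewrite mulr_ge0 ?barycenter_ge0. Qed.

Lemma bary_le_sum C x u : (forall s, 0 <= x s) -> bary C x u <= \sum_(s <- C) x s.
Proof. by move=> x0; apply: ler_sum => s _; rewrite ler_piMr ?barycenter_ge0 ?barycenter_le1. Qed.

Lemma bary_out C x u : (forall s, s \in C -> u \notin s) -> bary C x u = 0.
Proof.
by move=> uC; apply: big1_fset => s /uC us _; rewrite /barycenter (negbTE us) !mul0r mulr0.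
Qed.

Lemma bary_eq C x x' u : (forall s, s \in C -> x s = x' s) -> bary C x u = bary C x' u.
Proof. by move=> xx'; apply: eq_fbigr => s sC _; rewrite xx'. Qed.

Lemma bary_fsetD1 C x s u : s \in C ->
  bary C x u = bary (C `\ s) x u + x s * barycenter s u.
Proof. by move=> sC; rewrite /bary (big_fsetD1 s) //= addrC. Qed.

Lemma bary_lipschitz C x y u :
  `|bary C x u - bary C y u| <= \sum_(s <- C) `|x s - y s|.
Proof.
rewrite /bary -sumrB; apply: le_trans (ler_norm_sum _ _ _) _.
apply: ler_sum => s _; rewrite -mulrBl normrM ler_piMr ?normr_ge0 //.
by rewrite ger0_norm ?barycenter_ge0 ?barycenter_le1.
Qed.

End Barycentric.

Section Unbary.
Variables (R : realFieldType) (T : choiceType).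
Implicit Types (y : T -> R) (F s t : {fset T}).

(* The defaults 1 and 0 are harmless for values in [0, 1]. *)
Definition lo y s : R := \big[Num.min/1]_(v <- s) y v.
Definition hi y F s : R := \big[Num.max/0]_(v <- F `\` s) y v.
Definition gap y F s : R := Num.max 0 (lo y s - hi y F s).

(* The inverse of [bary] on a simplex F: the coordinate of y at the barycenter
   of s. It is nonzero only when the values of y on s all exceed those on
   F minus s, and it is then |s| times the gap between the two. *)
Definition unbary F y s : R :=
  if (s != fset0) && (s `<=` F) then #|`s|%:R * gap y F s else 0.

Lemma fset_seq_neq0 s : s != fset0 -> (s : seq T) != [::].
Proof. by rewrite -cardfs_eq0 -size_eq0. Qed.

Lemma lo_le y s v : v \in s -> lo y s <= y v.
Proof. by move=> vs; apply: ge_bigmin_seq. Qed.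

Lemma le_lo y s a : a <= 1 -> (forall v, v \in s -> a <= y v) -> a <= lo y s.
Proof. by move=> a1 ay; rewrite /lo big_seq le_bigmin. Qed.

Lemma lo_eq y y' s : (forall v, v \in s -> y v = y' v) -> lo y s = lo y' s.
Proof. by move=> yy'; apply: eq_big_seq. Qed.

Lemma lo_attained y s : s != fset0 -> (forall v, y v <= 1) ->
  exists2 v, v \in s & lo y s = y v.
Proof. by move=> /fset_seq_neq0 s0 y1; apply: bigmin_seq_attained. Qed.

Lemma hi_ge y F s v : v \in F `\` s -> y v <= hi y F s.
Proof. by move=> vFs; apply: le_bigmax_seq. Qed.

Lemma hi_ge0 y F s : 0 <= hi y F s.
Proof. exact: bigmax_ge_id. Qed.

Lemma hi_le y F s a : 0 <= a -> (forall v, v \in F `\` s -> y v <= a) -> hi y F s <= a.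
Proof. by move=> a0 ya; rewrite /hi big_seq bigmax_le. Qed.

Lemma hi_attained y F s : hi y F s = 0 \/ exists2 v, v \in F `\` s & hi y F s = y v.
Proof. exact: bigmax_seq_attained. Qed.

Lemma gap_ge0 y F s : 0 <= gap y F s.
Proof. by rewrite /gap le_max lexx. Qed.

Lemma unbary_ge0 F y s : 0 <= unbary F y s.
Proof. by rewrite /unbary; case: ifP => // _; rewrite mulr_ge0 ?gap_ge0. Qed.

Lemma unbary_out F y s : ~~ (s `<=` F) -> unbary F y s = 0.
Proof. by rewrite /unbary => /negbTE ->; rewrite andbF. Qed.

Lemma gap_eq0 y F s v : v \in s -> y v <= 0 -> gap y F s = 0.
Proof.
move=> vs yv; apply: max_l; rewrite subr_le0 (le_trans (lo_le _ vs)) //.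
exact: le_trans yv (hi_ge0 _ _ _).
Qed.

Lemma unbary_vanish F y s : (forall v, y v <= 0) -> unbary F y s = 0.
Proof.
move=> y0; rewrite /unbary; case: ifP => // /andP[/fset0Pn[v vs] _].
by rewrite (gap_eq0 _ vs) ?mulr0.
Qed.

Lemma unbary_neq0 F y s : unbary F y s != 0 ->
  [/\ s != fset0, s `<=` F & 0 < gap y F s].
Proof.
rewrite /unbary; case: ifP => [/andP[s0 sF] | _]; last by rewrite eqxx.
by rewrite mulf_eq0 negb_or => /andP[_ g0]; rewrite lt_def g0 gap_ge0.
Qed.

Lemma gap_gt0_hi y F s v : 0 < gap y F s -> v \in s -> hi y F s < y v.
Proof.
rewrite /gap lt_max ltxx /= subr_gt0 => lohi vs.
exact: lt_le_trans lohi (lo_le _ vs).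
Qed.

Lemma unbary_chain F y s t : unbary F y s != 0 -> unbary F y t != 0 ->
  s `<=` t \/ t `<=` s.
Proof.
move=> /unbary_neq0 [_ sF gs] /unbary_neq0 [_ tF gt].
case: (boolP (s `<=` t)) => [|/fsubsetPn [v vs vt]]; first by left.
case: (boolP (t `<=` s)) => [|/fsubsetPn [w wt ws]]; first by right.
have yvt : y v <= hi y F t by apply: hi_ge; rewrite inE vt (fsubsetP sF).
have yws : y w <= hi y F s by apply: hi_ge; rewrite inE ws (fsubsetP tF).
have := lt_le_trans (le_lt_trans yvt (gap_gt0_hi gt wt)) yws.
by move/lt_trans/(_ (gap_gt0_hi gs vs)); rewrite ltxx.
Qed.

Lemma unbary_supp F1 F2 y s : F1 `<=` F2 -> (forall v, v \notin F1 -> y v = 0) ->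
  (forall v, 0 <= y v) -> unbary F1 y s = unbary F2 y s.
Proof.
move=> F12 yout y0; rewrite /unbary; case: (boolP (s == fset0)) => //= s0.
case: (boolP (s `<=` F1)) => sF1; last first.
  have [v vs vF1] := fsubsetPn _ _ sF1.
  by case: ifP => // _; rewrite (gap_eq0 _ vs) ?mulr0 ?yout.
rewrite (fsubset_trans sF1 F12) /gap; congr (_ * Num.max 0 (_ - _)).
apply: le_anti; apply/andP; split; apply: hi_le (hi_ge0 _ _ _) _ => w /[!inE] /andP[ws wF].
  by apply: hi_ge; rewrite inE ws (fsubsetP F12).
by case: (boolP (w \in F1)) => wF1; [apply: hi_ge; rewrite inE ws | rewrite yout ?hi_ge0].
Qed.

Section Shift.
Variables (F s : {fset T}) (y : T -> R) (c : R) (z : T).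
Hypotheses (sF : s `<=` F) (zs : z \in s) (yz : y z = 0).
Hypotheses (y0 : forall v, 0 <= y v) (yout : forall v, v \notin s -> y v = 0).
Hypotheses (c0 : 0 <= c) (yc1 : forall v, y v + c <= 1).

Let y1 v : y v <= 1.
Proof. by apply: le_trans (yc1 v); rewrite lerDl. Qed.

Local Notation ys := (fun v => y v + (if v \in s then c else 0)).

Lemma unbary_shift_self : unbary F ys s = unbary F y s + #|`s|%:R * c.
Proof.
have s0 : s != fset0 by apply/fset0Pn; exists z.
have c1 : c <= 1 by have := yc1 z; rewrite yz add0r.
have lo_ys : lo ys s = c.
  apply: le_anti; apply/andP; split; last by apply: le_lo => // v vs; rewrite vs lerDr.
  by apply: le_trans (lo_le _ zs) _; rewrite zs yz add0r.
have lo_y : lo y s = 0.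
  by apply: le_anti; apply/andP; split; [rewrite -yz lo_le | apply: le_lo].
have hi_ys : hi ys F s = 0.
  apply: le_anti; rewrite hi_ge0 andbT; apply: hi_le => // w /[!inE] /andP[ws _].
  by rewrite (negbTE ws) addr0 yout.
have hi_y : hi y F s = 0.
  apply: le_anti; rewrite hi_ge0 andbT; apply: hi_le => // w /[!inE] /andP[ws _].
  by rewrite yout.
rewrite /unbary s0 sF /gap lo_ys lo_y hi_ys hi_y !subr0 maxxx mulr0 add0r.
by rewrite (max_r c0).
Qed.

Lemma unbary_shift_other t : t != s -> unbary F ys t = unbary F y t.
Proof.
move=> ts; rewrite /unbary; case: ifP => // /andP[t0 tF]; congr (_ * _).
case: (boolP (t `<=` s)) => tsub; last first.
  have [v vt vs] := fsubsetPn _ _ tsub.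
  by rewrite !(gap_eq0 _ vt) // ?(negbTE vs) yout ?addr0.
have [w0 w0s w0t] : exists2 w, w \in s & w \notin t.
  by apply/fsubsetPn; apply: contra ts => st; rewrite eqEfsubset tsub st.
have lo_ys : lo ys t = lo y t + c.
  rewrite (lo_eq (y' := fun v => y v + c)) => [|v /(fsubsetP tsub) -> //].
  apply: le_anti; apply/andP; split.
    by have [u ut ->] := lo_attained t0 y1; exact: lo_le ut.
  by have [v vt ->] := lo_attained t0 yc1; rewrite lerD2r lo_le.
have w0Ft : w0 \in F `\` t by rewrite inE w0t (fsubsetP sF).
have c_hi : c <= hi ys F t by apply: le_trans (hi_ge _ w0Ft); rewrite w0s lerDr.
have hi_ys : hi ys F t = hi y F t + c.
  apply: le_anti; apply/andP; split.
    apply: hi_le => [|w wFt]; first by rewrite addr_ge0 ?hi_ge0.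
    by rewrite lerD ?hi_ge //; case: ifP.
  case: (hi_attained y F t) => [->|[w wFt ->]]; first by rewrite add0r.
  case: (boolP (w \in s)) => ws; last by rewrite yout // add0r.
  by have := hi_ge ys wFt; rewrite ws.
by rewrite /gap lo_ys hi_ys opprD addrACA subrr addr0.
Qed.

Lemma unbary_shift t :
  unbary F ys t = unbary F y t + (if t == s then #|`s|%:R * c else 0).
Proof.
case: eqP => [->|/eqP ts]; first exact: unbary_shift_self.
by rewrite addr0 unbary_shift_other.
Qed.

End Shift.

Lemma unbary_mass F y : (forall v, 0 <= y v) -> (forall v, y v <= 1) ->
  (forall v, v \notin F -> y v = 0) ->
  \sum_(s <- fpowerset F) unbary F y s = \sum_(v <- F) y v.
Proof.
have [n] := ubnP #|`F|; elim: n F y => // n IH F y + y0 y1 yout.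
have [-> _|F0 cardF] := eqVneq F fset0.
  by rewrite fpowerset0 big_seq_fset1 big_seq_fset0 /unbary eqxx.
have [z zF loz] := lo_attained F0 y1.
have yz v : v \in F -> y z <= y v by rewrite -loz; exact: lo_le.
pose y' v := y v - (if v \in F then y z else 0).
have y'0 v : 0 <= y' v by rewrite subr_ge0; case: ifP => // /yz.
have y'out v : v \notin F `\ z -> y' v = 0.
  rewrite in_fsetD1 negb_and negbK => /orP[/eqP->|vF]; first by rewrite /y' zF subrr.
  by rewrite /y' (negbTE vF) subr0 yout.
have y'c1 v : y' v + y z <= 1.
  by rewrite /y'; case: ifP => vF; rewrite ?subrK // subr0 yout ?vF // add0r.
have yE : y = fun v => y' v + (if v \in F then y z else 0).
  by apply: funext => v; rewrite subrK.
have y'z : y' z = 0 by rewrite /y' zF subrr.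
have y'outF v : v \notin F -> y' v = 0.
  by move=> vF; apply: y'out; rewrite in_fsetD1 negb_and vF orbT.
have sumE s : unbary F y s =
    unbary (F `\ z) y' s + (if s == F then #|`F|%:R * y z else 0).
  rewrite [in LHS]yE (unbary_shift (fsubset_refl F) zF y'z y'0 y'outF (y0 z) y'c1).
  by rewrite (unbary_supp _ (fsubD1set F z) y'out y'0).
rewrite (eq_bigr _ (fun s _ => sumE s)) big_split /=.
rewrite sum_fset_pred1 ?fpowersetE ?fsubset_refl //.
have subP : fpowerset (F `\ z) `<=` fpowerset F by rewrite fpowersetS fsubD1set.
rewrite -(big_fset_incl _ subP); last first.
  by move=> s _; rewrite fpowersetE => /unbary_out.
have y'1 v : y' v <= 1 by apply: le_trans (y'c1 v); rewrite lerDl y0.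
have cardF' : (#|`F `\ z| < n)%N by move: cardF; rewrite (cardfsD1 z F) zF.
rewrite IH //.
rewrite [RHS](eq_big_seq (fun v => y' v + y z)) => [|v /= vF]; last by rewrite /y' vF subrK.
rewrite [RHS]big_split /= sum_fset_const; congr (_ + _).
by rewrite [RHS](big_fsetD1 z) //= y'z add0r.
Qed.

Lemma chain_greatest_private (C : {fset {fset T}}) s : is_chain C -> s \in C ->
  (forall a, a \in C -> a `<=` s) -> s != fset0 ->
  exists2 z, z \in s & forall a, a \in C `\ s -> z \notin a.
Proof.
move=> ch sC Cs /fset0Pn[z0 z0s].
have [->|/fset0Pn[a0 a0C']] := eqVneq (C `\ s) fset0; first by exists z0.
have [s2 s2C' C's2] := chain_greatest a0C' (chain_fsubset (fsubD1set C s) ch).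
have [z zs zs2] : exists2 z, z \in s & z \notin s2.
  apply/fsubsetPn; move: s2C'; rewrite in_fsetD1 => /andP[s2s /Cs s2s'].
  by apply: contra s2s => ss2; rewrite eqEfsubset s2s' ss2.
by exists z => // a /C's2 /fsubsetP as2; apply: contra zs2; exact: as2.
Qed.

Section PeelTop.
Variables (C : {fset {fset T}}) (x : {fset T} -> R) (F s : {fset T}).
Hypotheses (ch : is_chain C) (C0 : forall a, a \in C -> a != fset0).
Hypotheses (sC : s \in C) (Cs : forall a, a \in C -> a `<=` s) (sF : s `<=` F).
Hypotheses (x0 : forall a, 0 <= x a) (xC1 : \sum_(a <- C) x a <= 1).

Local Notation x' := (fun a => if a == s then 0 else x a).

Lemma sum_peel_top : \sum_(a <- C) x a = x s + \sum_(a <- C `\ s) x' a.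
Proof.
rewrite (big_fsetD1 s) //=; congr (_ + _).
by apply: eq_fbigr => a; rewrite in_fsetD1 => /andP[/negbTE ->].
Qed.

Lemma unbary_bary_peel t :
  unbary F (bary C x) t = unbary F (bary (C `\ s) x') t + (if t == s then x s else 0).
Proof.
have [z zs zC'] := chain_greatest_private ch sC Cs (C0 sC).
have cs0 : (0 < #|`s|)%N by rewrite cardfs_gt0 C0.
have cs : #|`s|%:R != 0 :> R by rewrite pnatr_eq0 -lt0n.
have bE : bary C x =
    fun u => bary (C `\ s) x' u + (if u \in s then x s / #|`s|%:R else 0).
  apply: funext => u; rewrite (bary_fsetD1 _ _ sC) /barycenter.
  rewrite (bary_eq (x' := x')) => [|a]; last by rewrite in_fsetD1 => /andP[/negbTE ->].
  by case: (u \in s); rewrite ?mul1r // mul0r mulr0.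
have x'0 a : 0 <= x' a by case: ifP.
have bz : bary (C `\ s) x' z = 0 by exact: bary_out.
have b0 v : 0 <= bary (C `\ s) x' v by exact: bary_ge0.
have bout v : v \notin s -> bary (C `\ s) x' v = 0.
  move=> vs; apply: bary_out => a /[!in_fsetD1] /andP[_ /Cs /fsubsetP sub].
  by apply: contra vs; exact: sub.
have c0 : 0 <= x s / #|`s|%:R by rewrite divr_ge0 ?x0.
have bc1 v : bary (C `\ s) x' v + x s / #|`s|%:R <= 1.
  apply: le_trans xC1; rewrite sum_peel_top addrC lerD ?bary_le_sum //.
  by rewrite ler_pdivrMr ?ltr0n // ler_peMr ?x0 // ler1n.
rewrite bE (unbary_shift sF zs bz b0 bout c0 bc1); congr (_ + _).
by case: eqP => // _; rewrite mulrC divfK.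
Qed.

End PeelTop.

Lemma unbary_bary C x F : is_chain C -> (forall s, s \in C -> s != fset0) ->
  (forall s, s \in C -> s `<=` F) -> (forall s, 0 <= x s) ->
  (forall s, s \notin C -> x s = 0) -> \sum_(s <- C) x s <= 1 ->
  forall t, unbary F (bary C x) t = x t.
Proof.
have [n] := ubnP #|`C|; elim: n C x => // n IH C x cardC ch C0 CF x0 xout xC1 t.
have [CE|/fset0Pn[a0 a0C]] := eqVneq C fset0.
  have bx0 v : bary C x v <= 0 by rewrite /bary CE big_seq_fset0.
  by rewrite unbary_vanish // xout // CE in_fset0.
have [s sC Cs] := chain_greatest a0C ch.
rewrite (unbary_bary_peel ch C0 sC Cs (CF _ sC) x0 xC1) IH //.
- by case: eqP => [->|_]; rewrite ?add0r ?addr0.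
- by move: cardC; rewrite (cardfsD1 s C) sC.
- exact: chain_fsubset (fsubD1set C s) ch.
- by move=> a /[!in_fsetD1] /andP[_ /C0].
- by move=> a /[!in_fsetD1] /andP[_ /CF].
- by move=> a; case: ifP.
- move=> a /[!in_fsetD1]; rewrite negb_and negbK => /orP[->//|aC].
  by case: ifP => // _; apply: xout.
- by apply: le_trans xC1; rewrite (sum_peel_top _ sC) lerDr x0.
Qed.

Lemma max0_lipschitz (a b : R) : `|Num.max 0 a - Num.max 0 b| <= `|a - b|.
Proof.
have [ha|ha] := leP 0 a; have [hb|hb] := leP 0 b => //.
- by rewrite subr0 ger0_norm // ger0_norm; lra.
- by rewrite sub0r normrN ger0_norm // ltr0_norm; lra.
- by rewrite subrr normr0 normr_ge0.
Qed.

Section Lipschitz.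
Variables (F : {fset T}) (y y' : T -> R) (e : R).
Hypotheses (ye : forall v, v \in F -> `|y v - y' v| <= e).
Hypotheses (y1 : forall v, y v <= 1) (y'1 : forall v, y' v <= 1).

Lemma lo_lipschitz s : s `<=` F -> s != fset0 -> `|lo y s - lo y' s| <= e.
Proof.
move=> /fsubsetP sF s0; rewrite ler_norml; apply/andP; split.
  have [v vs ->] := lo_attained s0 y1.
  have := ye (sF v vs); rewrite ler_norml => /andP[h _].
  by apply: le_trans h _; rewrite lerD2l lerN2 lo_le.
have [v vs ->] := lo_attained s0 y'1.
have := ye (sF v vs); rewrite ler_norml => /andP[_ h].
by apply: le_trans h; rewrite lerD2r lo_le.
Qed.

Lemma hi_lipschitz s : 0 <= e -> `|hi y F s - hi y' F s| <= e.
Proof.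
move=> e0; rewrite ler_norml; apply/andP; split.
  case: (hi_attained y' F s) => [->|[w wF ->]].
    by rewrite subr0 (le_trans _ (hi_ge0 _ _ _)) // oppr_le0.
  have := ye (fsubsetP (fsubsetDl F s) w wF); rewrite ler_norml => /andP[h _].
  by apply: le_trans h _; rewrite lerD2r hi_ge.
case: (hi_attained y F s) => [->|[w wF ->]].
  by rewrite sub0r (le_trans _ e0) // oppr_le0 hi_ge0.
have := ye (fsubsetP (fsubsetDl F s) w wF); rewrite ler_norml => /andP[_ h].
by apply: le_trans h; rewrite lerD2l lerN2 hi_ge.
Qed.

Lemma unbary_lipschitz s : 0 <= e ->
  `|unbary F y s - unbary F y' s| <= #|`s|%:R * (e + e).
Proof.
move=> e0; rewrite /unbary; case: ifP => [/andP[s0 sF]|_]; last first.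
  by rewrite subrr normr0 mulr_ge0 ?addr_ge0.
rewrite -mulrBr normrM ger0_norm // ler_wpM2l // /gap.
apply: le_trans (max0_lipschitz _ _) _.
have -> : lo y s - hi y F s - (lo y' s - hi y' F s) =
          (lo y s - lo y' s) - (hi y F s - hi y' F s) by ring.
apply: le_trans (ler_normB _ _) _.
exact: lerD (lo_lipschitz sF s0) (hi_lipschitz _ e0).
Qed.

End Lipschitz.

End Unbary.

Section GlobalMaps.
Variable R : realType.

(* Junk value [fset0] when f has no finite support. *)
Definition fsupp (T : choiceType) (f : T -> R) : {fset T} :=
  if pselect (exists F : {fset T}, forall v, v \notin F -> f v = 0) is left e
  then proj1_sig (cid e) else fset0.

Lemma fsuppP (T : choiceType) (f : T -> R) (F : {fset T}) :
  (forall v, v \notin F -> f v = 0) -> forall v, v \notin fsupp f -> f v = 0.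
Proof.
move=> fF; rewrite /fsupp; case: pselect => [e|[]]; last by exists F.
exact: (proj2_sig (cid e)).
Qed.

Definition bary_of (T : choiceType) (x : {fset T} -> R) : T -> R := bary (fsupp x) x.
Definition unbary_of (T : choiceType) (y : T -> R) : {fset T} -> R := unbary (fsupp y) y.

(* The two conditions that [contractible] imposes on H over each simplex. *)
Definition supported_on_gsimplex (D U : choiceType) (s : {fset D})
    (H : (D -> R) -> R -> U -> R) : Prop :=
  exists F : {fset U}, forall (x : D -> R) t, in_gsimplex s x -> in_unit t ->
    forall v, v \notin F -> H x t v = 0.

Definition continuous_on_gsimplex (D U : choiceType) (s : {fset D})
    (H : (D -> R) -> R -> U -> R) : Prop :=
  forall (x : D -> R) t, in_gsimplex s x -> in_unit t ->
    forall eps : R, 0 < eps -> exists2 delta : R, 0 < delta &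
      forall y u, in_gsimplex s y -> in_unit u ->
        (forall v, v \in s -> `|x v - y v| < delta) -> `|t - u| < delta ->
        forall v, `|H x t v - H y u v| < eps.

Variable T : choiceType.
Implicit Types (Y : {fset T} -> Prop) (y : T -> R) (x : {fset T} -> R).

Lemma bary_ofE x C : (forall s, s \notin C -> x s = 0) -> bary_of x = bary C x.
Proof.
move=> xC; apply: funext => u; rewrite /bary_of /bary.
by apply: sum_fset_supp => s; [move/(fsuppP xC) | move/xC] => ->; rewrite mul0r.
Qed.

Lemma unbary_ofE y F : (forall v, v \notin F -> y v = 0) -> (forall v, 0 <= y v) ->
  unbary_of y = unbary F y.
Proof.
move=> yF y0; apply: funext => s; rewrite /unbary_of.
rewrite (unbary_supp _ (fsubsetUl _ F) (fsuppP yF) y0).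
by rewrite (unbary_supp _ (fsubsetUr (fsupp y) F) yF y0).
Qed.

Lemma in_real_unbary_of Y y : is_complex Y -> in_real Y y -> in_real (sd Y) (unbary_of y).
Proof.
move=> HY [s [Ys ys]].
have y0 v : 0 <= y v by exact: gsimplex_ge0 ys.
have yout v : v \notin s -> y v = 0 by exact: gsimplex_out ys.
rewrite (unbary_ofE yout y0).
pose C := [fset a in fpowerset s | unbary s y a != 0].
have Cout a : a \notin C -> unbary s y a = 0.
  by rewrite !inE /= negb_and negbK => /orP[|/eqP //]; rewrite fpowersetE => /unbary_out.
have CP a : a \in C -> unbary s y a != 0 by rewrite !inE => /andP[_].
have sumC : \sum_(a <- C) unbary s y a = 1.
  have Pout a : a \notin fpowerset s -> unbary s y a = 0.
    by rewrite fpowersetE => /unbary_out.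
  rewrite (sum_fset_supp Cout Pout).
  by rewrite unbary_mass //; [case: ys => _ [] | move=> v; exact: gsimplex_le1 ys].
exists C; split; last by split=> //; split=> // a _; exact: unbary_ge0.
split.
  have [CE|//] := eqVneq C fset0.
  by move: sumC; rewrite CE big_seq_fset0 => /eqP; rewrite eq_sym oner_eq0.
split; last by move=> a b /CP ha /CP hb; exact: unbary_chain ha hb.
by move=> a /CP /unbary_neq0 [/fset0Pn[v va] sa _]; exact: (complex_face HY Ys sa va).
Qed.

Lemma bary_gsimplex (L : {fset T} -> Prop) C x s :
  is_complex L -> sd L C -> in_gsimplex C x -> s \in C ->
  (forall a, a \in C -> a `<=` s) -> in_gsimplex s (bary C x).
Proof.
move=> HL [_ [CL _]] xC sC Cs; split.
  move=> v vs; apply: bary_out => a /Cs /fsubsetP sub.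
  by apply: contra vs; exact: sub.
split=> [v _|]; first by apply: bary_ge0 => a; exact: gsimplex_ge0 xC.
have [_ [_ <-]] := xC; rewrite /bary exchange_big /=.
apply: eq_fbigr => a aC _; rewrite -mulr_sumr sum_barycenter ?mulr1 ?Cs //.
exact: HL.1 (CL _ aC).
Qed.

Lemma sd_greatest Y C : sd Y C -> exists2 s, s \in C & forall a, a \in C -> a `<=` s.
Proof. by move=> [/fset0Pn[a aC] [_ ch]]; exact: chain_greatest aC ch. Qed.

Section SdPoint.
Variables (Y : {fset T} -> Prop) (C : {fset {fset T}}) (x : {fset T} -> R).
Hypotheses (HY : is_complex Y) (HC : sd Y C) (xC : in_gsimplex C x).

Lemma bary_of_gsimplex : bary_of x = bary C x.
Proof. by apply: bary_ofE => a; exact: gsimplex_out xC. Qed.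

Lemma in_real_bary_of : in_real Y (bary_of x).
Proof.
have [s sC Cs] := sd_greatest HC; have [_ [CY _]] := HC.
by exists s; rewrite bary_of_gsimplex; split; [exact: CY | exact: bary_gsimplex HY HC xC sC Cs].
Qed.

Lemma unbary_of_bary_of : unbary_of (bary_of x) = x.
Proof.
have [s sC Cs] := sd_greatest HC; have [_ [CY ch]] := HC.
have xs := bary_gsimplex HY HC xC sC Cs.
have xs0 v : 0 <= bary C x v by exact: gsimplex_ge0 xs.
have xsout v : v \notin s -> bary C x v = 0 by exact: gsimplex_out xs.
rewrite bary_of_gsimplex (unbary_ofE xsout xs0).
apply: funext => a; apply: unbary_bary => //.
- by move=> b /CY; apply: HY.1.
- by move=> b; exact: gsimplex_ge0 xC.
- by move=> b; exact: gsimplex_out xC.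
- by case: xC => _ [_ ->].
Qed.

End SdPoint.

Lemma unbary_of_lipschitz Y y y' (F : {fset T}) e :
  in_real Y y -> in_real Y y' -> 0 <= e ->
  (forall v, v \notin F -> y v = 0) -> (forall v, v \notin F -> y' v = 0) ->
  (forall v, v \in F -> `|y v - y' v| <= e) ->
  forall s, `|unbary_of y s - unbary_of y' s| <= #|`F|%:R * (e + e).
Proof.
move=> yY y'Y e0 yF y'F ye s.
have y0 v : 0 <= y v by exact: in_real_ge0 yY.
have y'0 v : 0 <= y' v by exact: in_real_ge0 y'Y.
rewrite (unbary_ofE yF y0) (unbary_ofE y'F y'0).
have [sF|sF] := boolP (s `<=` F); last first.
  by rewrite !unbary_out // subrr normr0 mulr_ge0 ?addr_ge0.
have y1 v : y v <= 1 by exact: in_real_le1 yY.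
have y'1 v : y' v <= 1 by exact: in_real_le1 y'Y.
apply: le_trans (unbary_lipschitz ye y1 y'1 s e0) _.
by rewrite ler_wpM2r ?addr_ge0 // ler_nat fsubset_leq_card.
Qed.

End GlobalMaps.

Section SdHomotopy.
Variables (R : realType) (T : choiceType) (Y : {fset T} -> Prop).
Variable H : (T -> R) -> R -> T -> R.
Hypothesis HY : is_complex Y.
Hypothesis H_in : forall x t, in_real Y x -> in_unit t -> in_real Y (H x t).
Variables (C : {fset {fset T}}) (s : {fset T}).
Hypotheses (HC : sd Y C) (sC : s \in C) (Cs : forall a, a \in C -> a `<=` s).

Let Ys : Y s. Proof. by case: HC => _ [/(_ s sC)]. Qed.

Lemma sd_homotopy_supported : supported_on_gsimplex s H ->
  supported_on_gsimplex C (fun x t => unbary_of (H (bary_of x) t)).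
Proof.
move=> [F HF]; exists (fpowerset F) => x t xC tI a.
have xs := bary_gsimplex HY HC xC sC Cs.
have Hx := H_in (ex_intro _ s (conj Ys xs)) tI.
rewrite fpowersetE (bary_of_gsimplex xC) (unbary_ofE (HF _ _ xs tI)) => [/unbary_out //|v].
exact: in_real_ge0 Hx.
Qed.

(* The barycentric map is 1-Lipschitz from the sum norm to the sup norm, and
   [unbary] is Lipschitz with constant 2|F| on points supported in F. *)
Lemma sd_homotopy_continuous : supported_on_gsimplex s H ->
  continuous_on_gsimplex s H ->
  continuous_on_gsimplex C (fun x t => unbary_of (H (bary_of x) t)).
Proof.
move=> [F HF] Hcont x t xC tI eps eps0.
have gs (z : {fset T} -> R) : in_gsimplex C z -> in_gsimplex s (bary C z).
  by move=> zC; exact: bary_gsimplex HY HC zC sC Cs.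
have inH z u : in_gsimplex C z -> in_unit u -> in_real Y (H (bary C z) u).
  by move=> zC uI; apply: H_in uI; exists s; split; [exact: Ys | exact: gs].
pose e1 := eps / ((#|`F|.+1)%:R * 2).
have e10 : 0 < e1 by rewrite divr_gt0 // mulr_gt0 // ltr0n.
have [d d0 Hd] := Hcont _ _ (gs _ xC) tI e1 e10.
have M0 : 0 < #|`C|%:R + 1 :> R by rewrite ltr_wpDl.
exists (d / (#|`C|%:R + 1)) => [|y u yC uI xy tu v]; first by rewrite divr_gt0.
have dM : d / (#|`C|%:R + 1) <= d by rewrite ler_pdivrMr // ler_peMr ?(ltW d0) // lerDr.
have bxy w : w \in s -> `|bary C x w - bary C y w| < d.
  move=> _; apply: le_lt_trans (bary_lipschitz _ _ _ _) _.
  apply: le_lt_trans (_ : _ <= \sum_(a <- C) d / (#|`C|%:R + 1)) _.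
    by rewrite big_seq [X in _ <= X]big_seq ler_sum // => a aC; rewrite ltW ?xy.
  by rewrite sum_fset_const mulrA ltr_pdivrMr // mulrDr mulr1 mulrC ltrDl.
have He := Hd _ _ (gs _ yC) uI bxy (lt_le_trans tu dM).
have := unbary_of_lipschitz (inH _ _ xC tI) (inH _ _ yC uI) (ltW e10)
  (HF _ _ (gs _ xC) tI) (HF _ _ (gs _ yC) uI) (fun w _ => ltW (He w)) v.
rewrite (bary_of_gsimplex xC) (bary_of_gsimplex yC) => /le_lt_trans; apply.
have -> : #|`F|%:R * (e1 + e1) = eps * (#|`F|%:R / (#|`F|.+1)%:R).
  by rewrite /e1; field; rewrite addrC natr1 pnatr_eq0.
by rewrite gtr_pMr // ltr_pdivrMr ?ltr0n // mul1r ltr_nat.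
Qed.

End SdHomotopy.

Section Contractible.
Variable R : realType.

Lemma sd_contractible (T : choiceType) (Y : {fset T} -> Prop) :
  is_complex Y -> contractible R Y -> contractible R (sd Y).
Proof.
move=> HY [p [H [Yp [H0 [H1 [H_in Hs]]]]]].
exists (unbary_of p), (fun x t => unbary_of (H (bary_of x) t)).
split; first exact: in_real_unbary_of.
split.
  move=> x [C [HC xC]].
  by rewrite H0 ?(unbary_of_bary_of HY HC xC) //; exact: (in_real_bary_of HY HC xC).
split; first by move=> x [C [HC xC]]; rewrite H1 //; exact: (in_real_bary_of HY HC xC).
split.
  move=> x t [C [HC xC]] tI; apply: (in_real_unbary_of HY).
  by apply: H_in tI; exact: (in_real_bary_of HY HC xC).
move=> C HC; have [s sC Cs] := sd_greatest HC.
have Ys : Y s by case: HC => _ [+ _]; apply.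
have [supp cont] := Hs s Ys.
split; first exact: (sd_homotopy_supported HY H_in HC sC Cs supp).
exact: (sd_homotopy_continuous HY H_in HC sC Cs supp cont).
Qed.

Lemma iter_sd_contractible (T : choiceType) (Y : {fset T} -> Prop) k :
  is_complex Y -> contractible R Y -> contractible R (iter_sd Y k).
Proof.
move=> HY; elim: k => [//|k IH] /IH.
by apply: sd_contractible; exact: iter_sd_complex.
Qed.

Section Cone.
Variables (T : choiceType) (a : T).

Definition apex_point (v : T) : R := if v == a then 1 else 0.

Definition cone_homotopy (x : T -> R) (t : R) (v : T) : R :=
  (1 - t) * x v + t * apex_point v.

Lemma apex_point01 v : 0 <= apex_point v <= 1.
Proof. by rewrite /apex_point; case: ifP; rewrite ?lexx ?ler01. Qed.

Lemma apex_point_gsimplex : in_gsimplex [fset a] apex_point.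
Proof.
split=> [v /[!inE] /negbTE va|]; first by rewrite /apex_point va.
by split=> [v _|]; [case/andP: (apex_point01 v) | rewrite big_seq_fset1 /apex_point eqxx].
Qed.

Lemma cone_homotopy_gsimplex s x t : in_gsimplex s x -> in_unit t ->
  in_gsimplex (a |` s) (cone_homotopy x t).
Proof.
move=> xs /andP[t0 t1]; split.
  move=> v /[!inE] /norP[/negbTE va vs].
  by rewrite /cone_homotopy /apex_point va (gsimplex_out xs vs) !mulr0 addr0.
split.
  move=> v _; rewrite /cone_homotopy addr_ge0 ?mulr_ge0 ?subr_ge0 ?(gsimplex_ge0 _ xs) //.
  by case/andP: (apex_point01 v).
rewrite big_split /= -!mulr_sumr sum_fset_pred1 ?fsetU11 // mulr1.
have xout v : v \notin a |` s -> x v = 0.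
  by move=> vs; apply: (gsimplex_out xs); apply: contra vs => vs; rewrite inE vs orbT.
rewrite (sum_fset_supp xout (fun v => gsimplex_out xs (v := v))).
by case: xs => _ [_ ->]; rewrite mulr1 subrK.
Qed.

Lemma cone_homotopy_continuous s : continuous_on_gsimplex s cone_homotopy.
Proof.
move=> x t xs /andP[t0 t1] eps eps0; exists (eps / 2) => [|y u ys uI xy tu v].
  by rewrite divr_gt0.
have -> : cone_homotopy x t v - cone_homotopy y u v =
    (1 - t) * (x v - y v) + (t - u) * (apex_point v - y v).
  by rewrite /cone_homotopy; ring.
have xyv : `|x v - y v| < eps / 2.
  have [vs|vs] := boolP (v \in s); first exact: xy.
  by rewrite (gsimplex_out xs vs) (gsimplex_out ys vs) subrr normr0 divr_gt0.
have pyv : `|apex_point v - y v| <= 1.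
  have /andP[p0 p1] := apex_point01 v.
  have y0 := gsimplex_ge0 v ys; have y1 := gsimplex_le1 v ys.
  by rewrite ler_norml; apply/andP; split; lra.
apply: le_lt_trans (ler_normD _ _) _; rewrite [eps]splitr ltr_leD //.
  apply: le_lt_trans xyv; rewrite normrM ler_piMl ?normr_ge0 //.
  by rewrite ger0_norm ?subr_ge0 // lerBlDr lerDl.
by rewrite normrM; apply: le_trans (ltW tu); rewrite ler_piMr ?normr_ge0.
Qed.

Lemma cone_contractible (Y : {fset T} -> Prop) :
  Y [fset a] -> (forall s, Y s -> Y (a |` s)) -> contractible R Y.
Proof.
move=> Ya Ycone; exists apex_point, cone_homotopy; split.
  by exists [fset a]; split; [exact: Ya | exact: apex_point_gsimplex].
split.
  by move=> x _; apply: funext => v; rewrite /cone_homotopy subr0 mul1r mul0r addr0.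
split.
  by move=> x _; apply: funext => v; rewrite /cone_homotopy subrr mul0r add0r mul1r.
split=> [x t [s [Ys xs]] tI|s Ys].
  by exists (a |` s); split; [exact: Ycone | exact: cone_homotopy_gsimplex].
split; last exact: cone_homotopy_continuous.
by exists (a |` s) => x t xs tI; case: (cone_homotopy_gsimplex xs tI).
Qed.

End Cone.

End Contractible.

Theorem mainTheorem7 (R : realType) (V : choiceType) (K : {fset V} -> Prop)
    (m : nat) :
  is_complex K -> (0 < m)%N ->
  exists k : nat, (0 < k)%N /\ m_fine R (iter_sd K k) m.
Proof.
move=> HK _; exists m.+1; split=> //.
pose Z A := iter_sd (closed_star K (@common_carrier V m.+1 A)) m.+1.
exists Z; split=> [A subA diamA | A B _ _ _ _ AB]; last first.
  by apply: iter_sd_mono => s; apply: closed_star_anti => v; exact: common_carrier_anti.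
have [HA [AK [s As]]] := subA.
have [v Av] := common_carrier_exists HK subA diamA.
have HZ := closed_star_complex (common_carrier A) HK.
have AZ := iter_sd_closed_star HK HA AK.
have apex := closed_star_apex HK Av (carrier_closed_star HK HA AK As).
split; [split; [exact: iter_sd_complex|split]|split] => //.
- by apply: iter_sd_mono => t; exact: closed_star_sub.
- by exists s; exact: AZ.
- apply: iter_sd_contractible => //.
  exact: (cone_contractible R apex (closed_star_cone HK Av)).
Qed.
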